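(* Let $\mathcal A$ be a weakly amenable Banach algebra and $I$ a closed two-sided ideal of $\mathcal A$ which has a bounded approximate identity $(e_\alpha)_\alpha$ that is quasi-central, i.e. $\lim_\alpha(ae_\alpha-e_\alpha a)=0$ for every $a\in\mathcal A$. Then $\mathcal A$ is $I$-weakly amenable, i.e. $H^1(\mathcal A,I^* )=\{0\}$.
   Context: $I^*$ is a Banach $\mathcal A$-bimodule with $\langle x,a\cdot f\rangle=\langle xa,f\rangle$, $\langle x,f\cdot a\rangle=\langle ax,f\rangle$. A derivation $D:\mathcal A\to Z$ is a continuous linear map with $D(ab)=a\cdot D(b)+D(a)\cdot b$; it is inner if $D(a)=a\cdot z-z\cdot a$ for some $z\in Z$; $H^1(\mathcal A,Z)=\{0\}$ means every derivation is inner. $\mathcal A$ is weakly amenable if $H^1(\mathcal A,\mathcal A^* )=\{0\}$. *)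

From HB Require Import structures.
From mathcomp Require Import all_boot all_order all_algebra.
From mathcomp Require Import complex.
From mathcomp Require Import all_classical all_reals all_analysis.
Set Implicit Arguments. Unset Strict Implicit. Unset Printing Implicit Defensive.
Import Order.TTheory GRing.Theory Num.Theory.
Import numFieldNormedType.Exports.
Local Open Scope classical_set_scope.
Local Open Scope ring_scope.
Local Open Scope complex_scope.

Section BanachAlgebra.
Variables (R : realType) (A : completeNormedModType R[i]).

Definition banach_algebra_mul (mul : A -> A -> A) : Prop :=
  [/\ (forall (k : R[i]) (a b c : A), mul (k *: a + b) c = k *: mul a c + mul b c),
      (forall (k : R[i]) (a b c : A), mul a (k *: b + c) = k *: mul a b + mul a c),
      (forall a b c : A, mul a (mul b c) = mul (mul a b) c) &
      (forall a b : A, `|mul a b| <= `|a| * `|b|)].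

Definition closed_ideal (mul : A -> A -> A) (I : set A) : Prop :=
  [/\ I 0, (forall (k : R[i]) x y, I x -> I y -> I (k *: x + y)),
      (forall a x, I x -> I (mul a x) /\ I (mul x a)) & closed I].

(* Elements of the dual I^* are represented by functions f : A -> R[i]
   whose restriction to I is linear and bounded (only values on I matter). *)
Definition dual_elt (I : set A) (f : A -> R[i]) : Prop :=
  (forall (k : R[i]) x y, I x -> I y -> f (k *: x + y) = k * f x + f y) /\
  exists C : R, forall x, I x -> `|f x| <= C%:C * `|x|.

(* A derivation D : A -> I^*, for the module actions
   <x, a.f> = <xa, f> and <x, f.a> = <ax, f>.
   Continuity of the linear map D is boundedness in the operator norm. *)
Definition dual_derivation (mul : A -> A -> A) (I : set A)
    (D : A -> A -> R[i]) : Prop :=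
  [/\ (forall a, dual_elt I (D a)),
      (forall (k : R[i]) a b x, I x -> D (k *: a + b) x = k * D a x + D b x),
      (exists C : R, forall a x, I x -> `|D a x| <= C%:C * `|a| * `|x|) &
      (forall a b x, I x -> D (mul a b) x = D b (mul x a) + D a (mul b x))].

Definition inner_dual_derivation (mul : A -> A -> A) (I : set A)
    (D : A -> A -> R[i]) : Prop :=
  exists z : A -> R[i], dual_elt I z /\
    forall a x, I x -> D a x = z (mul x a) - z (mul a x).

Definition H1_dual_trivial (mul : A -> A -> A) (I : set A) : Prop :=
  forall D, dual_derivation mul I D -> inner_dual_derivation mul I D.

Definition weakly_amenable (mul : A -> A -> A) : Prop :=
  H1_dual_trivial mul setT.

Definition I_weakly_amenable (mul : A -> A -> A) (I : set A) : Prop :=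
  H1_dual_trivial mul I.

Definition directed_set (Idx : Type) (le : Idx -> Idx -> Prop) : Prop :=
  [/\ inhabited Idx, (forall i, le i i),
      (forall i j k, le i j -> le j k -> le i k) &
      (forall i j, exists k, le i k /\ le j k)].

Definition net_cvg (Idx : Type) (le : Idx -> Idx -> Prop) (u : Idx -> A) (l : A) : Prop :=
  forall eps : R, 0 < eps -> exists i0, forall i, le i0 i -> `|u i - l| < eps%:C.

Definition bounded_approx_identity (mul : A -> A -> A) (I : set A)
    (Idx : Type) (le : Idx -> Idx -> Prop) (e : Idx -> A) : Prop :=
  [/\ (forall i, I (e i)),
      (exists M : R, forall i, `|e i| <= M%:C) &
      (forall x, I x -> net_cvg le (fun i => mul x (e i)) x /\
                        net_cvg le (fun i => mul (e i) x) x)].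

Definition quasi_central (mul : A -> A -> A)
    (Idx : Type) (le : Idx -> Idx -> Prop) (e : Idx -> A) : Prop :=
  forall a, net_cvg le (fun i => mul a (e i) - mul (e i) a) 0.

End BanachAlgebra.

(* Let D : A -> I^* be a derivation and e_t the quasi-central bounded
   approximate identity.  Along an ultrafilter U refining the tails of the net,
   set D~(a)(y) := lim_U D(a)(e_t y e_t); the limit exists because these values
   are bounded.  D~ is a derivation into A^*: D(ab)(e y e) differs from
   D(b)(e (ya) e) + D(a)(e (by) e) by D applied to e (y (ea - ae)) and
   (be - eb)(y e), which vanish by quasi-centrality.  Weak amenability makes D~
   inner, D~(a)(y) = w(ya) - w(ay), and D~ = D on I because e x e -> x for
   x in I; hence D is implemented by the restriction of w to I. *)

From HB Require Import structures.
From mathcomp Require Import all_boot all_order all_algebra.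
From mathcomp Require Import complex.
From mathcomp Require Import all_classical all_reals all_analysis.
From mathcomp Require Import ring.
Import Order.TTheory GRing.Theory Num.Theory.
Import numFieldNormedType.Exports.
Local Open Scope classical_set_scope.
Local Open Scope ring_scope.
Local Open Scope complex_scope.

Lemma norm_cvg_le {K : numFieldType} {V : pseudoMetricNormedZmodType K}
    {T : Type} [F : set_system T] {FF : ProperFilter F}
    [f : T -> V] [l : V] [B : K] :
  f @ F --> l -> B \is Num.real -> (forall t, `|f t| <= B) -> `|l| <= B.
Proof.
move=> fl Breal fB; rewrite real_leNgt ?normr_real //; apply/negP.
move=> /(cvgr_norm_gt _ fl) /filter_ex [t] /= Bft.
by have := lt_le_trans Bft (fB t); rewrite ltxx.
Qed.

Lemma norm_le_cvg0 {K : numFieldType} {V W : normedModType K}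
    {T : Type} [F : set_system T] {FF : Filter F}
    [u : T -> V] [v : T -> W] (k : K) :
  0 <= k -> (forall t, `|u t| <= k * `|v t|) -> v @ F --> 0 -> u @ F --> 0.
Proof.
move=> k0 uv /(cvgZ (cvg_cst k)); rewrite scaler0 => /cvgr0Pnorm_lt kv0.
apply/cvgr0Pnorm_lt => eps /kv0; apply: filterS => t /=.
by rewrite normrZ ger0_norm //; apply: le_lt_trans.
Qed.

Section ultrafilter_limits.
Context {T : Type} {U : set_system T} (UU : UltraFilter U).

Lemma ultra_fmap {X : Type} (g : T -> X) : UltraFilter (g @ U).
Proof.
split=> [|G PG UG]; first exact: fmap_proper_filter.
apply/funext => B; apply/propext; split=> [GB|]; last exact: UG.
have [//|UnB] := in_ultra_setVsetC (g @^-1` B) UU.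
have : G (B `&` ~` B) by apply: filterI => //; apply: UG.
by rewrite setICr => /filter_ex [].
Qed.

Lemma ultra_bounded_cvg_real {R : realType} [g : T -> R] [B : R] :
  (forall t, `|g t| <= B) -> cvg (g @ U).
Proof.
move=> gB; have := @segment_compact R (- B) B.
rewrite compact_ultra => /(_ (g @ U) (ultra_fmap g)) [|l [_ gl]].
  by apply: (filterE (F := U)) => t; rewrite /= in_itv /= -ler_norml.
exact: cvgP gl.
Qed.

End ultrafilter_limits.

(* [R[i]] carries the topology of its norm, as MathComp-Analysis does for
   real types; limits of complex-valued nets are taken in it. *)
#[non_forgetful_inheritance]
HB.instance Definition _ (R : realType) := NormedModule.copy R[i] R[i]^o.

Section complex_limits.
Context {R : realType}.
Implicit Types (x : R) (z : R[i]).

Lemma normc_real x : `|x%:C| = `|x|%:C.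
Proof. by rewrite normc_def /= expr0n addr0 sqrtr_sqr. Qed.

Lemma normc_i : `|'i : R[i]| = 1.
Proof. by rewrite normc_def /= expr0n expr1n add0r sqrtr1. Qed.

Lemma normc_ge_Im z : `|complex.Im z|%:C <= `|z|.
Proof.
by have := normc_ge_Re (z * 'i); rewrite ReiNIm normrN normrM normc_i mulr1.
Qed.

Lemma gt0_complexE z : 0 < z -> 0 < complex.Re z /\ z = (complex.Re z)%:C.
Proof.
move=> z0; split; first by move: z0; rewrite ltcE => /andP[].
by rewrite RRe_real // gtr0_real.
Qed.

Lemma cvg_real_complex {T : Type} [F : set_system T] {FF : Filter F}
    [g : T -> R] [p : R] :
  g @ F --> p -> (fun t => (g t)%:C) @ F --> p%:C.
Proof.
move=> /cvgrPdist_lt gp; apply/cvgrPdist_lt => eps /gt0_complexE [eps0 ->].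
by apply: filterS (gp _ eps0) => t; rewrite -rmorphB normc_real ltcR.
Qed.

Lemma ultra_bounded_cvg_complex {T : Type} {U : set_system T}
    (UU : UltraFilter U) [f : T -> R[i]] [B : R[i]] :
  (forall t, `|f t| <= B) -> cvg (f @ U).
Proof.
move=> fB; have [t0 _] := filter_ex (@filterT _ U _).
have /RRe_real BE : B \is Num.real by rewrite ger0_real // (le_trans _ (fB t0)).
have ReB t : `|complex.Re (f t)| <= complex.Re B.
  by rewrite -lecR BE (le_trans (normc_ge_Re _)).
have ImB t : `|complex.Im (f t)| <= complex.Re B.
  by rewrite -lecR BE (le_trans (normc_ge_Im _)).
have /cvg_ex [p Rep] : cvg (complex.Re (f t) @[t --> U]).
  exact (ultra_bounded_cvg_real UU ReB).
have /cvg_ex [q Imq] : cvg (complex.Im (f t) @[t --> U]).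
  exact (ultra_bounded_cvg_real UU ImB).
have -> : f = fun t => (complex.Re (f t))%:C + 'i * (complex.Im (f t))%:C.
  by apply/funext => t; rewrite -complexE.
apply/cvg_ex; exists (p%:C + 'i * q%:C).
by apply: cvgD; [|apply: cvgM; [exact: cvg_cst|]]; exact: cvg_real_complex.
Qed.

End complex_limits.

Lemma directed_ultrafilter {Idx : Type} [le : Idx -> Idx -> Prop] :
  directed_set le -> exists U : set_system Idx,
    UltraFilter U /\ forall i, U [set j | le i j].
Proof.
move=> [[i0] le_refl le_trans le_directed].
pose tails := filter_from setT (fun i => [set j | le i j]).
have tails_proper : ProperFilter tails.
  apply: filter_from_proper => [|i _]; last by exists i; apply: le_refl.
  apply: filter_from_filter; first by exists i0.
  move=> i j _ _; have [k [ik jk]] := le_directed i j.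
  by exists k => // l kl; split; [apply: le_trans ik kl|apply: le_trans jk kl].
have [U [UU tailsU]] := ultraFilterLemma tails_proper.
by exists U; split=> // i; apply: tailsU; exists i.
Qed.

Lemma net_cvg_filter {R : realType} {A : completeNormedModType R[i]}
    {Idx : Type} [le : Idx -> Idx -> Prop] [F : set_system Idx] {FF : Filter F}
    [u : Idx -> A] [l : A] :
  (forall i, F [set j | le i j]) -> net_cvg le u l -> u @ F --> l.
Proof.
move=> Ftails ul; apply/cvgrPdistC_lt => eps /gt0_complexE [eps0 ->].
by have [i0 ul_i0] := ul _ eps0; apply: filterS (Ftails i0) => j /ul_i0.
Qed.

Section banach_algebra.
Context {R : realType} {A : completeNormedModType R[i]} {mul : A -> A -> A}.
Hypothesis Hmul : banach_algebra_mul mul.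

Lemma mul_linearPl k a b c : mul (k *: a + b) c = k *: mul a c + mul b c.
Proof. by case: Hmul. Qed.

Lemma mul_linearPr k a b c : mul a (k *: b + c) = k *: mul a b + mul a c.
Proof. by case: Hmul. Qed.

Lemma mulA a b c : mul a (mul b c) = mul (mul a b) c.
Proof. by case: Hmul. Qed.

Lemma norm_mul_le a b : `|mul a b| <= `|a| * `|b|.
Proof. by case: Hmul. Qed.

Lemma mulBl a b c : mul (a - b) c = mul a c - mul b c.
Proof. by rewrite addrC -scaleN1r mul_linearPl scaleN1r addrC. Qed.

Lemma mulBr a b c : mul a (b - c) = mul a b - mul a c.
Proof. by rewrite addrC -scaleN1r mul_linearPr scaleN1r addrC. Qed.

Context {I : set A}.
Hypothesis HI : closed_ideal mul I.

Lemma ideal0 : I 0.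
Proof. by case: HI. Qed.

Lemma idealB [x y] : I x -> I y -> I (x - y).
Proof.
by case: HI => _ Ilin _ _ Ix Iy; rewrite addrC -scaleN1r; apply: Ilin.
Qed.

Lemma idealMl a [x] : I x -> I (mul a x).
Proof. by case: HI => _ _ Imul _ /(Imul a)[]. Qed.

Lemma idealMr a [x] : I x -> I (mul x a).
Proof. by case: HI => _ _ Imul _ /(Imul a)[]. Qed.

Lemma dual_elt_sub (J : set A) (f : A -> R[i]) :
  J `<=` I -> dual_elt I f -> dual_elt J f.
Proof.
move=> JI [flin [C fC]]; split=> [k x y /JI Ix /JI Iy|]; first exact: flin.
by exists C => x /JI; apply: fC.
Qed.

Section dual_element.
Context {f : A -> R[i]}.
Hypothesis If : dual_elt I f.

Lemma dual_eltB [x y] : I x -> I y -> f (x - y) = f x - f y.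
Proof.
by case: If => flin _ Ix Iy; rewrite addrC -scaleN1r flin // mulN1r addrC.
Qed.

Lemma dual_elt0 : f 0 = 0.
Proof. by rewrite -(subrr 0) dual_eltB ?subrr //; apply: ideal0. Qed.

Lemma dual_elt_bounded :
  exists2 C : R, 0 <= C & forall x, I x -> `|f x| <= C%:C * `|x|.
Proof.
case: If => _ [C fC]; exists `|C| => // x /fC /le_trans; apply.
by rewrite ler_wpM2r // lecR ler_norm.
Qed.

Lemma dual_elt_cvg {T : Type} [F : set_system T] {FF : Filter F}
    [u : T -> A] [x : A] :
  (forall t, I (u t)) -> I x -> u @ F --> x -> (fun t => f (u t)) @ F --> f x.
Proof.
move=> Iu Ix /subr_cvg0 ux; apply: (subr_cvg0 _ _).1.
have [C C0 fC] := dual_elt_bounded.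
under eq_fun do rewrite -dual_eltB //.
apply: (norm_le_cvg0 C%:C) ux => [|t]; first by rewrite ler0c.
by rewrite fC //; apply: idealB.
Qed.

End dual_element.

Lemma dual_derivation_bounded [D] : dual_derivation mul I D ->
  exists2 C : R, 0 <= C & forall a x, I x -> `|D a x| <= C%:C * `|a| * `|x|.
Proof.
case=> _ _ [C DC] _; exists `|C| => // a x /DC /le_trans; apply.
by rewrite !ler_wpM2r // lecR ler_norm.
Qed.

End banach_algebra.

Section quasi_central_extension.
Context {R : realType} {A : completeNormedModType R[i]}.
Context {mul : A -> A -> A} {I : set A}.
Hypotheses (Hmul : banach_algebra_mul mul) (HI : closed_ideal mul I).
Context {T : Type} {U : set_system T} {e : T -> A} {M : R}.
Hypotheses (UU : UltraFilter U) (eI : forall t, I (e t))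
  (e_bounded : forall t, `|e t| <= M%:C)
  (e_left : forall x, I x -> mul (e t) x @[t --> U] --> x)
  (e_right : forall x, I x -> mul x (e t) @[t --> U] --> x)
  (e_central : forall a, mul a (e t) - mul (e t) a @[t --> U] --> 0).

Let M_ge0 : 0 <= M%:C.
Proof.
by have [t _] := filter_ex (@filterT _ U _); apply: le_trans (e_bounded t).
Qed.

Definition sandwich t y := mul (e t) (mul y (e t)).

Lemma sandwich_ideal t y : I (sandwich t y).
Proof. by rewrite /sandwich; do 2 apply: (idealMl HI). Qed.

Lemma sandwich_linear t k x y :
  sandwich t (k *: x + y) = k *: sandwich t x + sandwich t y.
Proof. by rewrite /sandwich (mul_linearPl Hmul) (mul_linearPr Hmul). Qed.

Lemma norm_sandwich_le t y : `|sandwich t y| <= M%:C ^+ 2 * `|y|.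
Proof.
apply: le_trans (norm_mul_le Hmul _ _) _; rewrite expr2 -mulrA.
apply: ler_pM; rewrite ?normr_ge0 ?e_bounded //.
apply: le_trans (norm_mul_le Hmul _ _) _.
by rewrite mulrC ler_wpM2r ?e_bounded.
Qed.

Lemma sandwich_cvg x : I x -> sandwich t x @[t --> U] --> x.
Proof.
move=> Ix; apply: (subr_cvg0 _ _).1; rewrite -[0]addr0.
have /subr_cvg0 ex_x := e_left _ Ix; have /subr_cvg0 xe_x := e_right _ Ix.
have -> : (fun t => sandwich t x - x) =
    (fun t => mul (e t) (mul x (e t) - x) + (mul (e t) x - x)).
  by apply/funext => t; rewrite /sandwich (mulBr Hmul) addrA subrK.
apply: cvgD (norm_le_cvg0 M%:C M_ge0 _ xe_x) ex_x => t.
by apply: le_trans (norm_mul_le Hmul _ _) _; rewrite ler_wpM2r.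
Qed.

Lemma sandwich_mulr_cvg0 a y :
  mul (sandwich t y) a - sandwich t (mul y a) @[t --> U] --> 0.
Proof.
apply: (norm_le_cvg0 (M%:C * `|y|) _ _ (e_central a)) => [|t].
  by rewrite mulr_ge0.
have -> : mul (sandwich t y) a - sandwich t (mul y a) =
    mul (e t) (mul y (mul (e t) a - mul a (e t))).
  by rewrite /sandwich !(mulBr Hmul) !(mulA Hmul).
apply: le_trans (norm_mul_le Hmul _ _) _; rewrite -mulrA.
apply: ler_pM; rewrite ?normr_ge0 ?e_bounded //.
by apply: le_trans (norm_mul_le Hmul _ _) _; rewrite distrC.
Qed.

Lemma sandwich_mull_cvg0 b y :
  mul b (sandwich t y) - sandwich t (mul b y) @[t --> U] --> 0.
Proof.
apply: (norm_le_cvg0 (`|y| * M%:C) _ _ (e_central b)) => [|t].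
  by rewrite mulr_ge0.
have -> : mul b (sandwich t y) - sandwich t (mul b y) =
    mul (mul b (e t) - mul (e t) b) (mul y (e t)).
  by rewrite /sandwich (mulBl Hmul) !(mulA Hmul).
apply: le_trans (norm_mul_le Hmul _ _) _; rewrite mulrC ler_wpM2r //.
by apply: le_trans (norm_mul_le Hmul _ _) _; rewrite ler_wpM2l ?e_bounded.
Qed.

Context {D : A -> A -> R[i]}.
Hypothesis HD : dual_derivation mul I D.

Let D_dual a : dual_elt I (D a).
Proof. by case: HD. Qed.

Lemma norm_D_sandwich_le a k t y : 0 <= k ->
    (forall x, I x -> `|D a x| <= k * `|x|) ->
  `|D a (sandwich t y)| <= k * (M%:C ^+ 2 * `|y|).
Proof.
move=> k0 Dk; apply: le_trans (Dk _ (sandwich_ideal t y)) _.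
by rewrite ler_wpM2l ?norm_sandwich_le.
Qed.

Definition ext_derivation a y := lim (D a (sandwich t y) @[t --> U]).

Lemma ext_derivation_cvg a y :
  D a (sandwich t y) @[t --> U] --> ext_derivation a y.
Proof.
have [C C0 DC] := dual_elt_bounded (D_dual a).
have Hb t : `|D a (sandwich t y)| <= C%:C * (M%:C ^+ 2 * `|y|).
  by apply: norm_D_sandwich_le; rewrite ?ler0c.
exact (ultra_bounded_cvg_complex UU Hb).
Qed.

Lemma norm_ext_derivation_le a k y : 0 <= k ->
    (forall x, I x -> `|D a x| <= k * `|x|) ->
  `|ext_derivation a y| <= k * (M%:C ^+ 2 * `|y|).
Proof.
move=> k0 Dk; apply: (norm_cvg_le (ext_derivation_cvg a y)) => [|t].
  by rewrite ger0_real // !mulr_ge0 ?exprn_ge0.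
exact: norm_D_sandwich_le.
Qed.

Lemma ext_derivation_eq a x : I x -> ext_derivation a x = D a x.
Proof.
move=> Ix; apply: cvg_lim => //.
exact (dual_elt_cvg HI (D_dual a) (sandwich_ideal^~ x) Ix (sandwich_cvg x Ix)).
Qed.

Lemma ext_derivation_linear a k x y :
  ext_derivation a (k *: x + y) = k * ext_derivation a x + ext_derivation a y.
Proof.
apply: cvg_lim => //.
have -> : (fun t => D a (sandwich t (k *: x + y))) =
    (fun t => k * D a (sandwich t x) + D a (sandwich t y)).
  apply/funext => t; rewrite sandwich_linear.
  by case: (D_dual a) => Dlin _; apply: Dlin; apply: sandwich_ideal.
by apply: cvgD; [apply: cvgM; [exact: cvg_cst|]|]; exact: ext_derivation_cvg.
Qed.

Lemma ext_derivation_linear_l k a b y :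
  ext_derivation (k *: a + b) y = k * ext_derivation a y + ext_derivation b y.
Proof.
apply: cvg_lim => //.
have -> : (fun t => D (k *: a + b) (sandwich t y)) =
    (fun t => k * D a (sandwich t y) + D b (sandwich t y)).
  apply/funext => t; case: HD => _ Dlin _ _.
  by apply: Dlin; apply: sandwich_ideal.
by apply: cvgD; [apply: cvgM; [exact: cvg_cst|]|]; exact: ext_derivation_cvg.
Qed.

Lemma ext_derivation_leibniz a b y :
  ext_derivation (mul a b) y =
  ext_derivation b (mul y a) + ext_derivation a (mul b y).
Proof.
apply: cvg_lim => //.
have Isy t := sandwich_ideal t y.
have -> : (fun t => D (mul a b) (sandwich t y)) = (fun t =>
    (D b (sandwich t (mul y a)) + D a (sandwich t (mul b y))) +
    (D b (mul (sandwich t y) a - sandwich t (mul y a)) +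
     D a (mul b (sandwich t y) - sandwich t (mul b y)))).
  apply/funext => t; case: HD => _ _ _ ->; last exact: Isy.
  rewrite (dual_eltB (D_dual b) (idealMr HI a (Isy t)) (sandwich_ideal t _)).
  rewrite (dual_eltB (D_dual a) (idealMl HI b (Isy t)) (sandwich_ideal t _)).
  by rewrite addrACA !subrKC.
have c1 : D b (mul (sandwich t y) a - sandwich t (mul y a)) @[t --> U] --> 0.
  rewrite -(dual_elt0 HI (D_dual b)).
  exact (dual_elt_cvg HI (D_dual b) (fun t => idealB HI (idealMr HI a (Isy t))
    (sandwich_ideal t _)) (ideal0 HI) (sandwich_mulr_cvg0 a y)).
have c2 : D a (mul b (sandwich t y) - sandwich t (mul b y)) @[t --> U] --> 0.
  rewrite -(dual_elt0 HI (D_dual a)).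
  exact (dual_elt_cvg HI (D_dual a) (fun t => idealB HI (idealMl HI b (Isy t))
    (sandwich_ideal t _)) (ideal0 HI) (sandwich_mull_cvg0 b y)).
rewrite -[_ + ext_derivation a _]addr0 -(addr0 0).
exact (cvgD (cvgD (ext_derivation_cvg b _) (ext_derivation_cvg a _))
  (cvgD c1 c2)).
Qed.

Lemma ext_derivation_is_derivation : dual_derivation mul setT ext_derivation.
Proof.
split=> [a|k a b y _||a b y _].
- split=> [k x y _ _|]; first exact: ext_derivation_linear.
  have [C C0 DC] := dual_elt_bounded (D_dual a).
  exists (C * M ^+ 2) => y _; rewrite rmorphM rmorphXn -mulrA.
  by apply: norm_ext_derivation_le => [|x]; [rewrite ler0c|apply: DC].
- exact: ext_derivation_linear_l.
- have [C C0 DC] := dual_derivation_bounded HD.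
  exists (C * M ^+ 2) => a y _.
  have -> : (C * M ^+ 2)%:C * `|a| * `|y| = C%:C * `|a| * (M%:C ^+ 2 * `|y|).
    by rewrite rmorphM rmorphXn; ring.
  by apply: norm_ext_derivation_le => [|x]; [rewrite mulr_ge0 ?ler0c|apply: DC].
- exact: ext_derivation_leibniz.
Qed.

Lemma derivation_inner_of_weakly_amenable :
  weakly_amenable mul -> inner_dual_derivation mul I D.
Proof.
move=> /(_ _ ext_derivation_is_derivation) [w [w_dual w_inner]].
exists w; split; first exact: dual_elt_sub w_dual.
by move=> a x Ix; rewrite -ext_derivation_eq // w_inner.
Qed.

End quasi_central_extension.

Theorem theorem3p3 (R : realType) (A : completeNormedModType R[i])
    (mul : A -> A -> A) (I : set A)
    (Idx : Type) (le : Idx -> Idx -> Prop) (e : Idx -> A) :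
  banach_algebra_mul mul ->
  weakly_amenable mul ->
  closed_ideal mul I ->
  directed_set le ->
  bounded_approx_identity mul I le e ->
  quasi_central mul le e ->
  I_weakly_amenable mul I.
Proof.
move=> Hmul HWA HI le_directed [eI [M e_bounded] e_approx] e_central D HD.
have [U [UU U_tails]] := directed_ultrafilter le_directed.
apply: (derivation_inner_of_weakly_amenable Hmul HI UU eI e_bounded _ _ _ HD)
  HWA.
- by move=> x /e_approx [_ e_left]; apply: net_cvg_filter U_tails e_left.
- by move=> x /e_approx [e_right _]; apply: net_cvg_filter U_tails e_right.
- by move=> a; apply: net_cvg_filter U_tails (e_central a).
Qed.
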